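(* Let $\overline{F}(x) = 1$ for $x < 0$ and $\overline{F}(x) = (\lfloor x \rfloor + 2)^{-1}$ for $x \geq 0$, and let $\theta \in (0,1)$. Then $\theta\, \overline{F}(x) \leq \overline{F}(x/\theta)$ holds for all $x \geq 0$ if and only if $$\theta \in \mathcal{A} := \left(0, \tfrac{1}{2}\right] \cup \left\{ \tfrac{k+1}{2k+1} : k \in \{1,2,3,\dots\} \right\}.$$ *)

From Stdlib Require Import Reals.
Open Scope R_scope.

(* floor x : the greatest integer <= x (Stdlib's Int_part x = up x - 1). *)
Definition floorR (x : R) : Z := Int_part x.

Definition Fbar (x : R) : R :=
  if Rlt_dec x 0 then 1 else / (IZR (floorR x) + 2).

Definition setA (theta : R) : Prop :=
  (0 < theta <= 1/2) \/
  (exists k : nat, (1 <= k)%nat /\ theta = (INR k + 1) / (2 * INR k + 1)).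

From Stdlib Require Import Reals Lra Lia ZArith.
Open Scope R_scope.

(* For [x >= 0] the inequality reads [theta (floor (x/theta) + 2) <= floor x + 2].
   Since [theta floor (x/theta) <= x < floor x + 1], it holds when [theta <= 1/2];
   for [theta = (k+1)/(2k+1)] that strict bound becomes the integer inequality
   [(k+1) floor (x/theta) < (2k+1) (floor x + 1)], which gains the missing unit.
   Conversely, for [1/2 < theta < 1], testing at [x = theta (2n+1)], where
   [x/theta] is the odd integer [2n+1], shows that [theta < (n+1)/(2n+1)] forces
   [theta <= (n+2)/(2n+3)]; starting from [theta < 1] and iterating, either some
   [(k+1)/(2k+1)] equals [theta], or [theta < (n+1)/(2n+1)] for every [n], which
   is impossible since these ratios tend to [1/2]. *)

Lemma floorR_spec (x : R) : IZR (floorR x) <= x < IZR (floorR x) + 1.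
Proof. unfold floorR; pose proof (base_Int_part x); lra. Qed.

Lemma floorR_IZR (z : Z) : floorR (IZR z) = z.
Proof. unfold floorR; symmetry; apply Int_part_spec; lra. Qed.

Lemma floorR_le (x : R) (z : Z) : x < IZR z + 1 -> (floorR x <= z)%Z.
Proof.
  intros Hx; pose proof (floorR_spec x).
  assert (IZR (floorR x) < IZR (z + 1)) by (rewrite plus_IZR; lra).
  apply lt_IZR in H0; lia.
Qed.

Lemma Fbar_nonneg (x : R) : 0 <= x -> Fbar x = / (IZR (floorR x) + 2).
Proof. intros Hx; unfold Fbar; destruct (Rlt_dec x 0); [lra | reflexivity]. Qed.

Lemma Rmult_inv_le_inv_iff (t a b : R) :
  0 < a -> 0 < b -> t * / a <= / b <-> t * b <= a.
Proof.
  intros Ha Hb.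
  assert (Hab : 0 < / a * / b) by (apply Rmult_lt_0_compat; apply Rinv_0_lt_compat; lra).
  split; intros H.
  - apply (Rmult_le_reg_r (/ a * / b)); [exact Hab|].
    replace (t * b * (/ a * / b)) with (t * / a) by (field; lra).
    replace (a * (/ a * / b)) with (/ b) by (field; lra).
    exact H.
  - apply (Rmult_le_compat_r (/ a * / b)) in H; [|lra].
    replace (t * b * (/ a * / b)) with (t * / a) in H by (field; lra).
    replace (a * (/ a * / b)) with (/ b) in H by (field; lra).
    exact H.
Qed.

Lemma Fbar_scaling_iff (theta x : R) : 0 < theta -> 0 <= x ->
  theta * Fbar x <= Fbar (x / theta) <->
  theta * (IZR (floorR (x / theta)) + 2) <= IZR (floorR x) + 2.
Proof.
  intros Htheta Hx.
  assert (Hxt : 0 <= x / theta)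
    by (unfold Rdiv; apply Rmult_le_pos; [lra | left; apply Rinv_0_lt_compat; lra]).
  pose proof (floorR_spec x); pose proof (floorR_spec (x / theta)).
  rewrite (Fbar_nonneg x Hx), (Fbar_nonneg _ Hxt).
  apply Rmult_inv_le_inv_iff; lra.
Qed.

Lemma floorR_div_mul_le (theta x : R) : 0 < theta ->
  theta * IZR (floorR (x / theta)) <= x.
Proof.
  intros Htheta; pose proof (floorR_spec (x / theta)) as [Hle _].
  apply (Rmult_le_compat_l theta) in Hle; [|lra].
  replace (theta * (x / theta)) with x in Hle by (field; lra); exact Hle.
Qed.

Lemma scaled_floor_bound_ratio (p q a b : Z) (x : R) :
  (0 < q)%Z -> (2 * p <= q + 1)%Z ->
  IZR p / IZR q * IZR a <= x -> x < IZR b + 1 ->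
  IZR p / IZR q * (IZR a + 2) <= IZR b + 2.
Proof.
  intros Hq Hpq Ha Hb.
  assert (Hq' : 0 < IZR q) by (apply IZR_lt; exact Hq).
  assert (Hlt : IZR (p * a) < IZR (q * (b + 1))).
  { rewrite !mult_IZR, plus_IZR.
    apply (Rmult_le_compat_l (IZR q)) in Ha; [|lra].
    replace (IZR q * (IZR p / IZR q * IZR a)) with (IZR p * IZR a) in Ha
      by (field; lra).
    nra. }
  apply lt_IZR in Hlt.
  assert (Hint : (p * (a + 2) <= q * (b + 2))%Z) by lia.
  apply IZR_le in Hint; rewrite !mult_IZR, !plus_IZR in Hint.
  apply (Rmult_le_reg_l (IZR q)); [lra|].
  replace (IZR q * (IZR p / IZR q * (IZR a + 2))) with (IZR p * (IZR a + 2))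
    by (field; lra).
  exact Hint.
Qed.

Lemma scaling_of_setA (theta : R) : setA theta ->
  forall x : R, 0 <= x -> theta * Fbar x <= Fbar (x / theta).
Proof.
  intros HA x Hx.
  assert (Htheta : 0 < theta).
  { destruct HA as [HA | [k [_ ->]]]; [lra|].
    pose proof (pos_INR k); apply Rdiv_lt_0_compat; lra. }
  apply Fbar_scaling_iff; [exact Htheta | exact Hx |].
  pose proof (floorR_div_mul_le theta x Htheta); pose proof (floorR_spec x).
  destruct HA as [HA | [k [_ Hk]]].
  - lra.
  - assert (Hratio : theta = IZR (Z.of_nat k + 1) / IZR (2 * Z.of_nat k + 1)).
    { rewrite Hk, plus_IZR, plus_IZR, mult_IZR, <- INR_IZR_INZ; reflexivity. }
    rewrite Hratio in *.
    apply scaled_floor_bound_ratio with x; [lia | lia | lra | lra].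
Qed.

Lemma scaling_at_odd_multiple (theta : R) (n : nat) : 0 < theta ->
  theta * (2 * INR n + 1) < INR n + 1 ->
  theta * Fbar (theta * (2 * INR n + 1)) <= Fbar (theta * (2 * INR n + 1) / theta) ->
  theta * (2 * INR n + 3) <= INR n + 2.
Proof.
  intros Htheta Hlt Hscale.
  set (x := theta * (2 * INR n + 1)) in *.
  pose proof (pos_INR n).
  assert (Hx : 0 <= x) by (unfold x; nra).
  apply Fbar_scaling_iff in Hscale; [|exact Htheta|exact Hx].
  assert (Hodd : x / theta = IZR (2 * Z.of_nat n + 1)).
  { unfold x; rewrite plus_IZR, mult_IZR, <- INR_IZR_INZ; field; lra. }
  rewrite Hodd, floorR_IZR, plus_IZR, mult_IZR, <- INR_IZR_INZ in Hscale.
  assert (Hfloor : IZR (floorR x) <= INR n).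
  { rewrite INR_IZR_INZ; apply IZR_le, floorR_le; rewrite <- INR_IZR_INZ; exact Hlt. }
  lra.
Qed.

Lemma setA_of_scaling (theta : R) : 0 < theta < 1 ->
  (forall x : R, 0 <= x -> theta * Fbar x <= Fbar (x / theta)) -> setA theta.
Proof.
  intros Htheta Hscale.
  destruct (Rle_dec theta (1 / 2)) as [Hhalf | Hhalf]; [left; lra|].
  assert (Hdescent : forall n : nat, theta * (2 * INR n + 1) < INR n + 1 \/ setA theta).
  { induction n as [|n [IH | IH]]; [left; simpl; lra | | right; exact IH].
    pose proof (pos_INR n).
    assert (Hx : 0 <= theta * (2 * INR n + 1)) by nra.
    pose proof (scaling_at_odd_multiple theta n ltac:(lra) IH (Hscale _ Hx)) as Hnext.
    rewrite S_INR.
    destruct (Rle_lt_or_eq_dec _ _ Hnext) as [Hstrict | Heq]; [left; lra|].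
    right; right; exists (S n); split; [lia|].
    rewrite S_INR; field_simplify_eq; lra. }
  destruct (INR_archimed (2 * theta - 1) (1 - theta)) as [n Hn]; [lra|].
  destruct (Hdescent n) as [Hlt | HA]; [lra | exact HA].
Qed.

Theorem lemma13 (theta : R) (Htheta : 0 < theta < 1) :
  (forall x : R, 0 <= x -> theta * Fbar x <= Fbar (x / theta)) <-> setA theta.
Proof.
  split.
  - exact (setA_of_scaling theta Htheta).
  - exact (scaling_of_setA theta).
Qed.
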